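(* Let $\mathbf z=(z_1,z_2,z_3)\in\mathbb{R}^3$ with $z_2>0$ and $z_3>0$, and let $\Lambda^*$ be as defined in the context. Then $$\Lambda^*(\mathbf z)=\ln\pi+\sup_{\lambda_1\neq 0,\ \beta>1}\Big\{\tfrac{z_2}{2}+\tfrac{z_3}{2}+\lambda_1z_1-|\lambda_1|\beta\sqrt{z_2z_3}+\tfrac12\ln(\beta^2-1)+\ln|\lambda_1|-\ln\Big(\pi+2\arctan\Big(\tfrac{\lambda_1}{|\lambda_1|\sqrt{\beta^2-1}}\Big)\Big)\Big\}.$$
   Context: For $\boldsymbol\lambda=(\lambda_1,\lambda_2,\lambda_3)\in\mathbb{R}^3$ let $D=\lambda_1^2-(1-2\lambda_2)(1-2\lambda_3)$, and let $$S=\{\boldsymbol\lambda:\lambda_2<\tfrac12,\ \lambda_3<\tfrac12,\ D<0\}.$$ For $\boldsymbol\lambda\in S$ put $$\Lambda(\boldsymbol\lambda)=\ln\left(\pi+2\arctan\left(\frac{\lambda_1}{\sqrt{-D}}\right)\right)-\ln\pi-\tfrac12\ln(-D).$$ This is the logarithmic moment generating function $\ln\mathbb{E}[\exp(\lambda_1\hat X\hat Y+\lambda_2\hat X^2+\lambda_3\hat Y^2)]$ for independent half-normal $\hat X,\hat Y$. The Fenchel–Legendre transform is $$\Lambda^*(\mathbf z)=\sup_{\boldsymbol\lambda\in S}\{\langle\boldsymbol\lambda,\mathbf z\rangle-\Lambda(\boldsymbol\lambda)\}.$$ *)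

From Stdlib Require Import Reals.
From Coquelicot Require Import Coquelicot.
Open Scope R_scope.

Definition Dlam (l1 l2 l3 : R) : R := l1 ^ 2 - (1 - 2 * l2) * (1 - 2 * l3).

Definition inS (l1 l2 l3 : R) : Prop :=
  l2 < 1 / 2 /\ l3 < 1 / 2 /\ Dlam l1 l2 l3 < 0.

Definition Lam (l1 l2 l3 : R) : R :=
  ln (PI + 2 * atan (l1 / sqrt (- Dlam l1 l2 l3))) - ln PI
  - (1 / 2) * ln (- Dlam l1 l2 l3).

Definition LamStar (z1 z2 z3 : R) : Rbar :=
  Lub_Rbar (fun y => exists l1 l2 l3, inS l1 l2 l3 /\
                       y = l1 * z1 + l2 * z2 + l3 * z3 - Lam l1 l2 l3).

Definition Phi (z1 z2 z3 l1 b : R) : R :=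
  z2 / 2 + z3 / 2 + l1 * z1 - Rabs l1 * b * sqrt (z2 * z3)
  + (1 / 2) * ln (b ^ 2 - 1) + ln (Rabs l1)
  - ln (PI + 2 * atan (l1 / (Rabs l1 * sqrt (b ^ 2 - 1)))).

(** The objective [<lambda, z> - Lambda(lambda)] is rewritten in the variables
    [a = 1 - 2 lambda_2], [c = 1 - 2 lambda_3] (so [a, c > 0] and [a c > lambda_1^2]) and
    [beta = sqrt(a c) / |lambda_1| > 1].  Then
    [<lambda, z> - Lambda(lambda) = ln pi + Phi(lambda_1, beta) - (sqrt(a z_2) - sqrt(c z_3))^2 / 2],
    so the objective never exceeds [ln pi + Phi], with equality for the choice
    [a z_2 = c z_3] of the free ratio [a / c].  Points with [lambda_1 = 0] are not
    covered by this parametrisation, but they are limits of points with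
    [lambda_1 <> 0] along which the objective is continuous. *)

From Stdlib Require Import Reals Lra.
From Coquelicot Require Import Coquelicot.
Open Scope R_scope.

Lemma Lub_Rbar_le_of_approx (A B : R -> Prop) :
  (forall x eps, A x -> 0 < eps -> exists y, B y /\ x - eps < y) ->
  Rbar_le (Lub_Rbar A) (Lub_Rbar B).
Proof.
  intros approx.
  destruct (Lub_Rbar_correct A) as [_ least]; apply least.
  intros x Ax.
  destruct (Lub_Rbar_correct B) as [ubB _].
  assert (near : forall eps, 0 < eps -> Rbar_le (x - eps) (Lub_Rbar B)).
  { intros eps heps.
    destruct (approx x eps Ax heps) as [y [By hy]].
    apply Rbar_le_trans with (Finite y); [simpl; lra | exact (ubB y By)]. }
  destruct (Lub_Rbar B) as [l | | ]; simpl in *; auto.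
  - apply le_epsilon; intros eps heps; specialize (near eps heps); lra.
  - exact (near 1 Rlt_0_1).
Qed.

Lemma Lub_Rbar_shift (E : R -> Prop) (c : R) :
  Lub_Rbar (fun x => E (x - c)) = Rbar_plus c (Lub_Rbar E).
Proof.
  apply is_lub_Rbar_unique.
  destruct (Lub_Rbar_correct E) as [ub least].
  split.
  - intros x Ex. specialize (ub _ Ex).
    destruct (Lub_Rbar E); simpl in *; auto; lra.
  - intros u ubu.
    assert (ubE : is_ub_Rbar E (Rbar_plus u (- c))).
    { intros y Ey.
      assert (Ey' : E ((y + c) - c)) by (replace (y + c - c) with y by ring; exact Ey).
      specialize (ubu _ Ey'). destruct u; simpl in *; auto; lra. }
    specialize (least _ ubE).
    destruct (Lub_Rbar E), u; simpl in *; auto; lra.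
Qed.

Lemma continuous_lower_approx_punctured (f : R -> R) (x eps delta : R) :
  continuous f x -> 0 < eps -> 0 < delta ->
  exists t, t <> x /\ Rabs (t - x) < delta /\ f x - eps < f t.
Proof.
  intros hf heps hdelta.
  destruct (proj1 (filterlim_locally f (f x)) hf (mkposreal eps heps)) as [d hd].
  pose proof (cond_pos d) as hd0.
  set (r := Rmin d delta / 2).
  assert (hr0 : 0 < r) by (apply Rdiv_lt_0_compat; [apply Rmin_pos|]; lra).
  assert (hrd : r < d) by (pose proof (Rmin_l d delta); unfold r; lra).
  assert (hrdelta : r < delta) by (pose proof (Rmin_r d delta); unfold r; lra).
  assert (hdist : Rabs (x + r - x) = r)
    by (replace (x + r - x) with r by ring; apply Rabs_right; lra).
  exists (x + r). split; [lra | split; [lra |]].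
  specialize (hd (x + r) ltac:(change (Rabs (x + r - x) < d); lra)).
  change (Rabs (f (x + r) - f x) < eps) in hd.
  apply Rabs_def2 in hd. lra.
Qed.

Lemma PI_add_2atan_pos (y : R) : 0 < PI + 2 * atan y.
Proof. destruct (atan_bound y). lra. Qed.

Definition legendre_obj (z1 z2 z3 l1 l2 l3 : R) : R :=
  l1 * z1 + l2 * z2 + l3 * z3 - Lam l1 l2 l3.

Lemma Dlam_half (l1 a c : R) : Dlam l1 ((1 - a) / 2) ((1 - c) / 2) = l1 ^ 2 - a * c.
Proof. unfold Dlam. field. Qed.

Lemma legendre_obj_eq_Phi (z1 z2 z3 l1 b a c : R) :
  0 <= z2 -> 0 <= z3 -> 0 <= a -> 0 <= c -> l1 <> 0 -> 1 < b -> a * c = (l1 * b) ^ 2 ->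
  legendre_obj z1 z2 z3 l1 ((1 - a) / 2) ((1 - c) / 2)
  = ln PI + Phi z1 z2 z3 l1 b - (sqrt (a * z2) - sqrt (c * z3)) ^ 2 / 2.
Proof.
  intros hz2 hz3 ha hc hl1 hb hac.
  assert (habs : 0 < Rabs l1) by (apply Rabs_pos_lt; exact hl1).
  assert (hb2 : 0 < b ^ 2 - 1) by nra.
  assert (negD : - Dlam l1 ((1 - a) / 2) ((1 - c) / 2) = l1 ^ 2 * (b ^ 2 - 1))
    by (rewrite Dlam_half, hac; ring).
  assert (sqrt_negD : sqrt (l1 ^ 2 * (b ^ 2 - 1)) = Rabs l1 * sqrt (b ^ 2 - 1)).
  { rewrite sqrt_mult_alt by nra. now rewrite <- (Rsqr_pow2 l1), sqrt_Rsqr_abs. }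
  assert (ln_negD : ln (l1 ^ 2 * (b ^ 2 - 1)) = 2 * ln (Rabs l1) + ln (b ^ 2 - 1)).
  { rewrite ln_mult by nra. rewrite <- pow2_abs, ln_pow by exact habs. simpl; ring. }
  assert (cross : sqrt (a * z2) * sqrt (c * z3) = Rabs l1 * b * sqrt (z2 * z3)).
  { rewrite <- sqrt_mult_alt by nra.
    replace (a * z2 * (c * z3)) with ((l1 * b) ^ 2 * (z2 * z3)) by (rewrite <- hac; ring).
    rewrite sqrt_mult_alt by nra. rewrite <- (Rsqr_pow2 (l1 * b)), sqrt_Rsqr_abs, Rabs_mult.
    rewrite (Rabs_right b) by lra. reflexivity. }
  unfold legendre_obj, Lam, Phi.
  rewrite negD, sqrt_negD, ln_negD.
  replace ((sqrt (a * z2) - sqrt (c * z3)) ^ 2)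
    with (sqrt (a * z2) ^ 2 + sqrt (c * z3) ^ 2 - 2 * (sqrt (a * z2) * sqrt (c * z3)))
    by ring.
  rewrite cross, !pow2_sqrt by nra.
  field.
Qed.

Lemma legendre_obj_le_Phi (z1 z2 z3 l1 l2 l3 : R) :
  0 < z2 -> 0 < z3 -> l1 <> 0 -> inS l1 l2 l3 ->
  exists b, 1 < b /\ legendre_obj z1 z2 z3 l1 l2 l3 <= ln PI + Phi z1 z2 z3 l1 b.
Proof.
  intros hz2 hz3 hl1 [hl2 [hl3 hD]].
  set (a := 1 - 2 * l2) in *. set (c := 1 - 2 * l3) in *.
  assert (ha : 0 < a) by (unfold a; lra).
  assert (hc : 0 < c) by (unfold c; lra).
  assert (hac : l1 ^ 2 < a * c) by (unfold Dlam in hD; fold a c in hD; lra).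
  assert (habs : 0 < Rabs l1) by (apply Rabs_pos_lt; exact hl1).
  set (b := sqrt (a * c) / Rabs l1).
  assert (hb : 1 < b).
  { unfold b. apply Rlt_div_r; [exact habs |]. rewrite Rmult_1_l.
    rewrite <- (sqrt_pow2 (Rabs l1)) by lra. rewrite pow2_abs.
    apply sqrt_lt_1_alt. split; [nra | exact hac]. }
  assert (hsq : a * c = (l1 * b) ^ 2).
  { unfold b, Rdiv. rewrite !Rpow_mult_distr, <- pow2_abs, pow2_sqrt by nra.
    field. lra. }
  exists b. split; [exact hb |].
  replace l2 with ((1 - a) / 2) by (unfold a; field).
  replace l3 with ((1 - c) / 2) by (unfold c; field).
  rewrite (legendre_obj_eq_Phi z1 z2 z3 l1 b a c) by lra.
  pose proof (pow2_ge_0 (sqrt (a * z2) - sqrt (c * z3))). lra.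
Qed.

Lemma Phi_attained (z1 z2 z3 l1 b : R) :
  0 < z2 -> 0 < z3 -> l1 <> 0 -> 1 < b ->
  exists l2 l3, inS l1 l2 l3 /\ legendre_obj z1 z2 z3 l1 l2 l3 = ln PI + Phi z1 z2 z3 l1 b.
Proof.
  intros hz2 hz3 hl1 hb.
  assert (habs : 0 < Rabs l1) by (apply Rabs_pos_lt; exact hl1).
  set (k := Rabs l1 * b).
  assert (hk : 0 < k) by (unfold k; nra).
  set (s2 := sqrt z2). set (s3 := sqrt z3).
  assert (hs2 : 0 < s2) by (apply sqrt_lt_R0; lra).
  assert (hs3 : 0 < s3) by (apply sqrt_lt_R0; lra).
  assert (Hz2 : z2 = s2 * s2) by (symmetry; apply sqrt_sqrt; lra).
  assert (Hz3 : z3 = s3 * s3) by (symmetry; apply sqrt_sqrt; lra).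
  set (a := k * s3 / s2). set (c := k * s2 / s3).
  assert (ha : 0 < a) by (unfold a; apply Rdiv_lt_0_compat; nra).
  assert (hc : 0 < c) by (unfold c; apply Rdiv_lt_0_compat; nra).
  assert (hac : a * c = (l1 * b) ^ 2).
  { unfold a, c, k. rewrite Rpow_mult_distr, <- pow2_abs. field. lra. }
  assert (balanced : a * z2 = c * z3) by (rewrite Hz2, Hz3; unfold a, c; field; lra).
  exists ((1 - a) / 2), ((1 - c) / 2). split.
  - unfold inS. rewrite Dlam_half, hac. repeat split; [lra | lra |].
    rewrite Rpow_mult_distr.
    pose proof (pow2_gt_0 l1 hl1). assert (0 < b ^ 2 - 1) by nra. nra.
  - rewrite (legendre_obj_eq_Phi z1 z2 z3 l1 b a c) by lra.
    rewrite balanced, Rminus_diag. simpl. lra.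
Qed.

Lemma legendre_obj_continuous_l1 (z1 z2 z3 l1 l2 l3 : R) :
  Dlam l1 l2 l3 < 0 -> continuous (fun t => legendre_obj z1 z2 z3 t l2 l3) l1.
Proof.
  intros hD. apply (@ex_derive_continuous R_AbsRing R_NormedModule).
  unfold legendre_obj, Lam, Dlam in *.
  assert (hnegD : 0 < - (l1 * (l1 * 1) + - ((1 - 2 * l2) * (1 - 2 * l3)))) by (simpl in hD; lra).
  auto_derive. repeat split; try exact hnegD.
  - apply Rgt_not_eq, sqrt_lt_R0, hnegD.
  - apply PI_add_2atan_pos.
Qed.

Lemma legendre_obj_l1_eq0_approx (z1 z2 z3 l2 l3 eps : R) :
  inS 0 l2 l3 -> 0 < eps ->
  exists t, t <> 0 /\ inS t l2 l3 /\
    legendre_obj z1 z2 z3 0 l2 l3 - eps < legendre_obj z1 z2 z3 t l2 l3.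
Proof.
  intros [hl2 [hl3 hD]] heps.
  set (p := (1 - 2 * l2) * (1 - 2 * l3)).
  assert (hp : 0 < p) by (unfold Dlam in hD; fold p in hD; lra).
  assert (hsp : 0 < sqrt p) by (apply sqrt_lt_R0; exact hp).
  destruct (continuous_lower_approx_punctured _ 0 eps (sqrt p)
              (legendre_obj_continuous_l1 z1 z2 z3 0 l2 l3 hD) heps hsp)
    as [t [ht [hclose happrox]]].
  rewrite Rminus_0_r in hclose.
  exists t. split; [exact ht | split; [| exact happrox]].
  unfold inS, Dlam. fold p. repeat split; [lra | lra |].
  rewrite <- pow2_abs, <- (pow2_sqrt p) by lra.
  pose proof (Rabs_pos t). nra.
Qed.

Lemma legendre_obj_approx_Phi (z1 z2 z3 l1 l2 l3 eps : R) :
  0 < z2 -> 0 < z3 -> inS l1 l2 l3 -> 0 < eps ->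
  exists m1 b, m1 <> 0 /\ 1 < b /\
    legendre_obj z1 z2 z3 l1 l2 l3 - eps < ln PI + Phi z1 z2 z3 m1 b.
Proof.
  intros hz2 hz3 hS heps.
  destruct (Req_dec l1 0) as [-> | hl1].
  - destruct (legendre_obj_l1_eq0_approx z1 z2 z3 l2 l3 eps hS heps)
      as [t [ht [hSt happrox]]].
    destruct (legendre_obj_le_Phi z1 z2 z3 t l2 l3 hz2 hz3 ht hSt) as [b [hb hle]].
    exists t, b. repeat split; [exact ht | exact hb | lra].
  - destruct (legendre_obj_le_Phi z1 z2 z3 l1 l2 l3 hz2 hz3 hl1 hS) as [b [hb hle]].
    exists l1, b. repeat split; [exact hl1 | exact hb | lra].
Qed.

Theorem lemma8 (z1 z2 z3 : R) (hz2 : 0 < z2) (hz3 : 0 < z3) :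
  LamStar z1 z2 z3 =
  Rbar_plus (Finite (ln PI))
    (Lub_Rbar (fun y => exists l1 b, l1 <> 0 /\ 1 < b /\ y = Phi z1 z2 z3 l1 b)).
Proof.
  unfold LamStar. rewrite <- Lub_Rbar_shift.
  apply Rbar_le_antisym; apply Lub_Rbar_le_of_approx.
  - intros x eps [l1 [l2 [l3 [hS ->]]]] heps.
    destruct (legendre_obj_approx_Phi z1 z2 z3 l1 l2 l3 eps hz2 hz3 hS heps)
      as [m1 [b [hm1 [hb happrox]]]].
    exists (ln PI + Phi z1 z2 z3 m1 b). split; [| exact happrox].
    exists m1, b. repeat split; [exact hm1 | exact hb | ring].
  - intros y eps [l1 [b [hl1 [hb hy]]]] heps.
    destruct (Phi_attained z1 z2 z3 l1 b hz2 hz3 hl1 hb) as [l2 [l3 [hS heq]]].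
    exists y. split; [| lra].
    exists l1, l2, l3. split; [exact hS |].
    change (y = legendre_obj z1 z2 z3 l1 l2 l3). lra.
Qed.
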